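(* Suppose Assumptions A1–A4 hold and $(\beta_t)$ is a positive sequence with $\lim_{t\to\infty}\beta_t=\infty$. Let $\bm{X}_t=\{\bm{x}_1,\dots,\bm{x}_t\}$ be the BOKE iterates, with bandwidth $\ell_t$ used at iteration $t$. Then: (i) If $\ell_t\equiv\ell$ is fixed, then $\inf_t h_{\mathcal{X},\bm{X}_t}\le R_\Psi\ell$ almost surely. (ii) There exists a bandwidth sequence $\ell_t\to0$ such that $\inf_t h_{\mathcal{X},\bm{X}_t}=0$ almost surely.
   Context: Standing setup. A1: $\mathcal{X}\subset\mathbb{R}^d$ is compact, convex, with nonempty interior. A2: $f:\mathcal{X}\to\mathbb{R}$ is continuous. A3: the kernel is $k(\bm{x},\bm{x}')=\Psi((\bm{x}-\bm{x}')/\ell)$ with bandwidth $\ell>0$, where $\Psi:\mathbb{R}^d\to[0,\infty)$ has support contained in $B(\bm{0},R_\Psi)$, is continuous at $\bm{0}$, $\Psi(\bm{0})>0$, $\sup\Psi\le M_\Psi$. A4: noises $\varepsilon_t$ independent, zero mean, sub-Gaussian with parameter $\varsigma>0$. For dataset $\bm{D}_t=\{(\bm{x}_i,y_i)\}_{i=1}^t$: $W_t(\bm{x})=\sum_i k(\bm{x},\bm{x}_i)$; $m_t(\bm{x})=\sum_ik(\bm{x},\bm{x}_i)y_i/W_t(\bm{x})$ if $W_t(\bm{x})>0$, else the average of $y_i$ over nearest points $\bm{x}_i$ to $\bm{x}$; $\hat\sigma_t=W_t^{-1/2}$ (with $c/0=\infty$). BOKE: starting from an initial dataset $\bm{D}_{T_0}$,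 for $t\ge T_0$ choose $\bm{x}_{t+1}\in\arg\max_{\bm{x}\in\mathcal{X}}\big(m_t(\bm{x})+\beta_t\hat\sigma_t(\bm{x})\big)$ (kernel quantities computed with bandwidth $\ell_t$), observe $y_{t+1}=f(\bm{x}_{t+1})+\varepsilon_{t+1}$ and add it to the dataset. The fill distance is $h_{\mathcal{X},\bm{X}_t}=\sup_{\bm{x}\in\mathcal{X}}\min_{i\le t}\|\bm{x}-\bm{x}_i\|$. *)

From HB Require Import structures.
From mathcomp Require Import all_boot all_order all_algebra.
From mathcomp Require Import all_classical all_reals all_analysis.
Set Implicit Arguments. Unset Strict Implicit. Unset Printing Implicit Defensive.
Import Order.TTheory GRing.Theory Num.Theory.
Import numFieldNormedType.Exports.
Local Open Scope classical_set_scope.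
Local Open Scope ring_scope.

Section BOKE.
Variables (R : realType) (d : nat).
Notation V := 'rV[R]_d.

Definition enorm (x : V) : R := Num.sqrt (\sum_(i < d) x ord0 i ^+ 2).

Definition convex_in (X : set V) : Prop :=
  forall x y (lam : R), X x -> X y -> 0 <= lam -> lam <= 1 ->
    X (lam *: x + (1 - lam) *: y).

Definition kern (Psi : V -> R) (l : R) (x x' : V) : R := Psi (l^-1 *: (x - x')).

(* dataset D_t = {(xs i, ys i) : i < t} (0-based indices) *)
Definition Wt (Psi : V -> R) (l : R) (xs : nat -> V) (t : nat) (x : V) : R :=
  \sum_(i < t) kern Psi l x (xs i).

Definition mindist (xs : nat -> V) (t : nat) (x : V) : R :=
  inf [set enorm (x - xs i) | i in [set i | (i < t)%N]].

Definition nearest_idx (xs : nat -> V) (t : nat) (x : V) : pred 'I_t :=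
  [pred i : 'I_t | enorm (x - xs i) == mindist xs t x].

Definition mt (Psi : V -> R) (l : R) (xs : nat -> V) (ys : nat -> R)
    (t : nat) (x : V) : R :=
  if 0 < Wt Psi l xs t x then
    (\sum_(i < t) kern Psi l x (xs i) * ys i) / Wt Psi l xs t x
  else (\sum_(i < t | (@nearest_idx xs t x) i) ys i) / #|(@nearest_idx xs t x)|%:R.

(* acquisition m_t + beta * sigma_t, sigma_t = W_t^{-1/2} (= +oo if W_t = 0) *)
Definition acq (Psi : V -> R) (l beta : R) (xs : nat -> V) (ys : nat -> R)
    (t : nat) (x : V) : \bar R :=
  if 0 < Wt Psi l xs t x then
    (mt Psi l xs ys t x + beta / Num.sqrt (Wt Psi l xs t x))%:E
  else +oo%E.

(* BOKE iterates: xs 0 .. xs (T0-1) is the initial design; for t >= T0 the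
   point xs t (the (t+1)-th point) maximises the acquisition built from the
   first t points with bandwidth ell t and parameter beta t. *)
Definition is_BOKE (X : set V) (Psi : V -> R) (T0 : nat) (beta ell : nat -> R)
    (xs : nat -> V) (ys : nat -> R) : Prop :=
  (forall i, (i < T0)%N -> X (xs i)) /\
  forall t, (T0 <= t)%N -> X (xs t) /\
    forall x, X x -> (acq Psi (ell t) (beta t) xs ys t x <=
                     acq Psi (ell t) (beta t) xs ys t (xs t))%E.

Definition fill_dist (X : set V) (xs : nat -> V) (t : nat) : R :=
  sup [set mindist xs t x | x in X].

Definition inf_fill (X : set V) (xs : nat -> V) : R :=
  inf [set fill_dist X xs t | t in [set t | (0 < t)%N]].

End BOKE.

Section Noise.
Local Open Scope ereal_scope.
Context {dm : measure_display} {T : measurableType dm} {R : realType}.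

Definition mutually_independent (P : probability T R) (eps : nat -> T -> R) :=
  (forall i, measurable_fun setT (eps i)) /\
  forall (s : seq nat), uniq s -> forall B : nat -> set R,
    (forall i, measurable (B i)) ->
    P (\bigcap_(i in [set` s]) (eps i @^-1` B i)) =
    (\prod_(i <- s) fine (P (eps i @^-1` B i)))%R%:E.

Definition zero_mean (P : probability T R) (e : T -> R) :=
  P.-integrable setT (EFin \o e) /\ \int[P]_w (e w)%:E = 0.

Definition sub_gaussian (P : probability T R) (vs : R) (e : T -> R) :=
  forall lam : R, \int[P]_w (expR (lam * e w))%:E <=
                  (expR (lam ^+ 2 * vs ^+ 2 / 2))%:E.
End Noise.

From HB Require Import structures.
From mathcomp Require Import all_boot all_order all_algebra.
From mathcomp Require Import all_classical all_reals all_analysis.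
From mathcomp Require Import lra zify finmap.
Import Order.TTheory GRing.Theory Num.Theory.
Import numFieldNormedType.Exports.
Local Open Scope classical_set_scope.
Local Open Scope ring_scope.
Set Implicit Arguments. Unset Strict Implicit. Unset Printing Implicit Defensive.

(* Let rho > 0 be such that Psi > 0 on the ball of radius rho. Where W_t
   vanishes the acquisition function is +oo, so as long as the fill distance
   exceeds RPsi * ell, the next BOKE sample lands where W_t vanishes, hence at
   distance at least rho * ell from all earlier samples. A compact X contains
   no m + 1 such mutually separated points for some m, so within any m + 1
   consecutive steps with bandwidth ell the fill distance drops to RPsi * ell.
   For (ii), use bandwidth 1/(k+1) on the k-th of a sequence of consecutive
   blocks of steps, each long enough for this argument. *)

Section sup_inf.
Variable R : realType.
Implicit Type E : set R.

Lemma inf_ge0 E : lbound E 0 -> 0 <= inf E.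
Proof.
move=> E0; have [nE|/nonemptyPn ->] := pselect (E !=set0); last by rewrite inf0.
exact: lb_le_inf E0.
Qed.

Lemma sup_ge0 E : lbound E 0 -> 0 <= sup E.
Proof.
move=> E0; have [[x Ex]|/nonemptyPn ->] := pselect (E !=set0); last first.
  by rewrite sup0.
have [ubE|nubE] := pselect (has_ubound E); last by rewrite sup_out // => -[].
exact: le_trans (E0 _ Ex) (ub_le_sup ubE Ex).
Qed.

End sup_inf.

Section fill_distance.
Variables (R : realType) (d : nat).
Notation V := 'rV[R]_d.
Implicit Types (X : set V) (xs : nat -> V).

Lemma enorm_ge0 (v : V) : 0 <= enorm v.
Proof. exact: sqrtr_ge0. Qed.

Lemma enormZ (a : R) (v : V) : enorm (a *: v) = `|a| * enorm v.
Proof.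
rewrite /enorm -sqrtr_sqr -sqrtrM ?sqr_ge0 // mulr_sumr.
by congr Num.sqrt; apply: eq_bigr => i _; rewrite mxE exprMn.
Qed.

Lemma mindist_ge0 xs t x : 0 <= mindist xs t x.
Proof. by apply: inf_ge0 => _ [i _ <-]; exact: enorm_ge0. Qed.

Lemma mindist_le xs t x i : (i < t)%N -> mindist xs t x <= enorm (x - xs i).
Proof.
move=> it; apply: ge_inf; last by exists i.
by exists 0 => _ [j _ <-]; exact: enorm_ge0.
Qed.

Lemma fill_dist_ge0 X xs t : 0 <= fill_dist X xs t.
Proof. by apply: sup_ge0 => _ [x _ <-]; exact: mindist_ge0. Qed.

Lemma inf_fill_ge0 X xs : 0 <= inf_fill X xs.
Proof. by apply: inf_ge0 => _ [t _ <-]; exact: fill_dist_ge0. Qed.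

Lemma inf_fill_le X xs t : (0 < t)%N -> inf_fill X xs <= fill_dist X xs t.
Proof.
move=> t0; apply: ge_inf; last by exists t.
by exists 0 => _ [s _ <-]; exact: fill_dist_ge0.
Qed.

End fill_distance.

Definition packing_bound {R : realType} {d : nat}
    (X : set 'rV[R]_d) (delta : R) (m : nat) :=
  forall y : nat -> 'rV[R]_d, (forall i, (i <= m)%N -> X (y i)) ->
    exists i j, (i < j <= m)%N /\ `|y j - y i| < delta.

(* Cover X by finitely many balls of radius delta/2 and apply the pigeonhole
   principle to the m + 1 points, m being the number of balls. *)
Lemma compact_packing_bound (R : realType) (d : nat) (X : set 'rV[R]_d)
    (delta : R) :
  compact X -> 0 < delta -> exists m, packing_bound X delta m.
Proof.
rewrite compact_cover => cX d0; have d2 : 0 < delta / 2 by rewrite divr_gt0.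
have [D _ cov] := cX _ X (fun p => ball p (delta / 2))
  (fun p _ => ball_open p _)
  (fun x Xx => ex_intro2 _ (fun p => ball p (delta / 2) x) x Xx (ballxx x d2)).
pose s := enum_fset D; exists (size s) => y Xy.
have centre (i : 'I_(size s).+1) :
    exists p, p \in s /\ ball p (delta / 2) (y i).
  by have [p Dp bp] := cov _ (Xy i (ltn_ord i)); exists p.
pose c i := sval (cid (centre i)).
have cP i : c i \in s /\ ball (c i) (delta / 2) (y i) := svalP (cid (centre i)).
pose G i : 'I_(size s) := Ordinal (etrans (index_mem (c i) s) (proj1 (cP i))).
have [a [b [ab Gab]]] : exists a b : 'I_(size s).+1, (a < b)%N /\ G a = G b.
  apply: contrapT => noColl.
  have injG : injective G.
    move=> a b Gab; have [ab|ba|/val_inj //] := ltngtP a b; exfalso;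
      apply: noColl.
      by exists a, b.
    by exists b, a.
  by have := leq_card G injG; rewrite !card_ord ltnn.
exists a, b; split; first by rewrite ab -ltnS ltn_ord.
have cab : c a = c b.
  by rewrite -(nth_index 0 (proj1 (cP a))) -[index _ _]/(val (G a)) Gab
    (nth_index 0 (proj1 (cP b))).
have : ball (y a) (delta / 2 + delta / 2) (y b).
  by apply: (@ball_triangle _ _ (c a)); [exact: ball_sym (proj2 (cP a))|
    rewrite cab; exact: (proj2 (cP b))].
by rewrite -ball_normE /= distrC -splitr.
Qed.

Lemma Psi_gt0_near0 (R : realType) (d : nat) (Psi : 'rV[R]_d -> R) :
  {for 0, continuous Psi} -> 0 < Psi 0 ->
  exists2 rho : R, 0 < rho & forall z, `|z| < rho -> 0 < Psi z.
Proof.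
move=> /cvgrPdist_lt /(_ (Psi 0 / 2)) + P0; rewrite divr_gt0 // => /(_ isT).
move=> /nbhs_norm0P [rho rho0 near0]; exists rho => // z /near0 /=.
by move=> /(le_lt_trans (ler_norm _)); lra.
Qed.

Section BOKE_exploration.
Variables (R : realType) (d : nat) (X : set 'rV[R]_d) (Psi : 'rV[R]_d -> R).
Variables (RPsi rho : R).
Hypotheses (Psi_ge0 : forall z, 0 <= Psi z)
  (Psi_supp : forall z, Psi z != 0 -> enorm z < RPsi)
  (Psi_gt0 : forall z, `|z| < rho -> 0 < Psi z).
Implicit Types (xs : nat -> 'rV[R]_d) (c : R).

Lemma Wt_gt0_near xs t x i c : 0 < c -> (i < t)%N -> `|x - xs i| < rho * c ->
  0 < Wt Psi c xs t x.
Proof.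
move=> c0 it near_i; rewrite /Wt (bigD1 (Ordinal it)) //=.
apply: (@lt_le_trans _ _ (kern Psi c x (xs i))); last first.
  by rewrite lerDl; apply: sumr_ge0 => j _; exact: Psi_ge0.
by apply: Psi_gt0; rewrite normrZ gtr0_norm ?invr_gt0 // ltr_pdivrMl // mulrC.
Qed.

Lemma fill_dist_le_bandwidth X0 xs t c : 0 < c -> X X0 ->
  (forall x, X x -> 0 < Wt Psi c xs t x) -> fill_dist X xs t <= RPsi * c.
Proof.
move=> c0 XX0 W_gt0; apply: ge_sup; first by exists (mindist xs t X0), X0.
move=> _ [x Xx <-].
have [[i]|noK] := pselect (exists i : 'I_t, kern Psi c x (xs i) != 0).
  move=> /Psi_supp; rewrite enormZ gtr0_norm ?invr_gt0 // ltr_pdivrMl // mulrC.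
  by move=> /ltW; apply: le_trans (mindist_le _ _ (ltn_ord i)).
have := W_gt0 _ Xx; rewrite /Wt big1 ?ltxx // => i _.
by apply/eqP; apply: contrapT => Ki; apply: noK; exists i; apply/negP.
Qed.

Lemma BOKE_sample_far X0 T0 beta ell xs ys t i :
  is_BOKE X Psi T0 beta ell xs ys -> (T0 <= t)%N -> 0 < ell t -> X X0 ->
  RPsi * ell t < fill_dist X xs t -> (i < t)%N -> rho * ell t <= `|xs t - xs i|.
Proof.
move=> [_ step] T0t c0 XX0 fill_big it; have [_ max_xt] := step t T0t.
have [x Xx Wx] : exists2 x, X x & ~ 0 < Wt Psi (ell t) xs t x.
  apply: contrapT => W_gt0; move: fill_big; rewrite ltNge.
  rewrite (fill_dist_le_bandwidth c0 XX0) // => y Xy.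
  by apply: contrapT => Wy; apply: W_gt0; exists y.
rewrite leNgt; apply/negP => near_i.
have := max_xt x Xx; rewrite /acq (negbTE (introN idP Wx)).
by rewrite (Wt_gt0_near c0 it near_i) leye_eq.
Qed.

Lemma BOKE_inf_fill_le X0 T0 beta ell xs ys c m t0 :
  (0 < T0)%N -> X X0 -> 0 < c -> is_BOKE X Psi T0 beta ell xs ys ->
  packing_bound X (rho * c) m -> (T0 <= t0)%N ->
  (forall t, (t0 <= t <= t0 + m)%N -> ell t = c) -> inf_fill X xs <= RPsi * c.
Proof.
move=> T0_gt0 XX0 c0 boke pack T0t0 ell_c.
have [t t0t fill_small] : exists2 t, (t0 <= t)%N & fill_dist X xs t <= RPsi * c.
  apply: contrapT => fill_big.
  have Xxs k : X (xs (t0 + k)%N).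
    by have [_ /(_ (t0 + k)%N (leq_trans T0t0 (leq_addr _ _))) []] := boke.
  have [i [j [/andP [ij jm] close]]] := pack _ (fun k _ => Xxs k).
  have ell_j : ell (t0 + j)%N = c by rewrite ell_c // leq_addr leq_add2l.
  suff : rho * c <= `|xs (t0 + j)%N - xs (t0 + i)%N| by rewrite leNgt close.
  rewrite -ell_j; apply: (BOKE_sample_far boke _ _ XX0).
  - exact: leq_trans T0t0 (leq_addr _ _).
  - by rewrite ell_j.
  - rewrite ell_j ltNge; apply/negP => small.
    by apply: fill_big; exists (t0 + j)%N; rewrite ?leq_addr.
  - by rewrite ltn_add2l.
by apply: le_trans fill_small; apply: inf_fill_le; apply: leq_trans T0_gt0 _;
  apply: leq_trans t0t.
Qed.
End BOKE_exploration.

Section block_schedule.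
Variables (T0 : nat) (len : nat -> nat).
Local Open Scope nat_scope.

(* Block [k] is the integer interval [block_start k, block_start k.+1), of
   length [(len k).+1]; the first block starts at [T0]. *)
Fixpoint block_start k :=
  if k is k'.+1 then block_start k' + (len k').+1 else T0.

Definition block_index t :=
  find (fun k => t < block_start k.+1) (iota 0 t.+1).

Local Notation s := block_start.
Local Notation K := block_index.

Lemma block_start_ltS k : s k < s k.+1.
Proof. by rewrite /= -addSnnS leq_addr. Qed.

Lemma block_start_mono a b : a <= b -> s a <= s b.
Proof.
move=> /subnKC <-; elim: (b - a) => [|n IH]; first by rewrite addn0.
by rewrite addnS (leq_trans IH) // ltnW // block_start_ltS.
Qed.

Lemma leq_block_start k : k <= s k.
Proof. elim: k => [//|k IH] /=; lia. Qed.

Lemma block_index_ltS t : t < s (K t).+1.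
Proof.
have hasK : has (fun k => t < s k.+1) (iota 0 t.+1).
  apply/hasP; exists t; first by rewrite mem_iota add0n ltnSn.
  by apply: leq_trans (leq_block_start _); rewrite ltnS.
have Kt : K t < t.+1 by move: hasK; rewrite has_find size_iota.
by have := nth_find 0 hasK; rewrite nth_iota ?add0n.
Qed.

Lemma block_start_leS t k : k < K t -> s k.+1 <= t.
Proof.
move=> kK; have := before_find 0 kK; rewrite nth_iota ?add0n => [/negbT|].
  by rewrite -leqNgt.
apply: leq_trans kK _; have := find_size (fun k => t < s k.+1) (iota 0 t.+1).
by rewrite size_iota.
Qed.

Lemma block_index_ge t k : s k <= t -> k <= K t.
Proof.
move=> kt; rewrite leqNgt; apply/negP => Kk.
have := block_index_ltS t; have := block_start_mono Kk; lia.
Qed.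

Lemma block_indexE t k : s k <= t < s k.+1 -> K t = k.
Proof.
move=> /andP [lo hi]; apply/eqP; rewrite eqn_leq block_index_ge // andbT.
by rewrite leqNgt; apply/negP => /block_start_leS; rewrite leqNgt hi.
Qed.

Lemma block_schedule :
  exists K : nat -> nat, K @ \oo --> \oo /\
    forall k, exists2 t0, T0 <= t0 & forall t, t0 <= t <= t0 + len k -> K t = k.
Proof.
exists block_index; split.
  apply/cvgnyPge => k; apply: filterS (nbhs_infty_ge (block_start k)).
  by move=> t; apply: block_index_ge.
move=> k; exists (block_start k).
  exact: (block_start_mono (leq0n k)).
move=> t /andP [lo hi]; apply: block_indexE.
by rewrite lo /= addnS ltnS.
Qed.

End block_schedule.

Theorem mainTheorem4 (R : realType) (d : nat)
    (X : set 'rV[R]_d) (f : 'rV[R]_d -> R)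
    (Psi : 'rV[R]_d -> R) (RPsi MPsi : R)
    (dm : measure_display) (T : measurableType dm) (P : probability T R)
    (eps : nat -> T -> R) (vs : R) (beta : nat -> R) (T0 : nat) :
  (* A1 *)
  compact X -> convex_in X -> interior X !=set0 ->
  (* A2 *)
  {within X, continuous f} ->
  (* A3 *)
  (forall z, 0 <= Psi z) -> (forall z, Psi z != 0 -> enorm z < RPsi) ->
  {for 0, continuous Psi} -> 0 < Psi 0 -> (forall z, Psi z <= MPsi) ->
  (* A4 *)
  0 < vs -> mutually_independent P eps ->
  (forall i, zero_mean P (eps i)) -> (forall i, sub_gaussian P vs (eps i)) ->
  (* beta_t *)
  (forall t, 0 < beta t) -> beta @ \oo --> +oo ->
  (* nonempty initial design *)
  (0 < T0)%N ->
  (* (i) fixed bandwidth *)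
  (forall ell : R, 0 < ell ->
    forall x : nat -> T -> 'rV[R]_d,
      (forall w, is_BOKE X Psi T0 beta (fun=> ell) (fun i => x i w)
                   (fun i => f (x i w) + eps i w)) ->
      \forall w \ae P, inf_fill X (fun i => x i w) <= RPsi * ell)
  /\
  (* (ii) vanishing bandwidth *)
  (exists ell : nat -> R, (forall t, 0 < ell t) /\ ell @ \oo --> 0 /\
    forall x : nat -> T -> 'rV[R]_d,
      (forall w, is_BOKE X Psi T0 beta ell (fun i => x i w)
                   (fun i => f (x i w) + eps i w)) ->
      \forall w \ae P, inf_fill X (fun i => x i w) = 0).
Proof.
move=> cX _ [X0 /interior_subset XX0] _ Psi_ge0 Psi_supp Psi_cont Psi0 _.
move=> _ _ _ _ _ _ T0_gt0.
have [rho rho_gt0 Psi_gt0] := Psi_gt0_near0 Psi_cont Psi0.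
have inf_fill_small := BOKE_inf_fill_le Psi_ge0 Psi_supp Psi_gt0 T0_gt0 XX0.
split.
  move=> ell ell_gt0 x boke; apply: aeW => w.
  have [m pack] := compact_packing_bound cX (mulr_gt0 rho_gt0 ell_gt0).
  exact: inf_fill_small ell_gt0 (boke w) pack (leqnn T0) (fun _ _ => erefl).
have pack k := compact_packing_bound cX (mulr_gt0 rho_gt0 (@harmonic_gt0 R k)).
have [K [K_cvgy K_block]] := block_schedule T0 (fun k => sval (cid (pack k))).
exists (harmonic \o K); split; first by move=> t; exact: harmonic_gt0.
split; first exact: cvg_comp K_cvgy cvg_harmonic.
move=> x boke; apply: aeW => w; apply/le_anti; rewrite inf_fill_ge0 andbT.
have le_harmonic k : inf_fill X (fun i => x i w) <= RPsi * harmonic k.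
  have [t0 T0t0 K_eq] := K_block k.
  apply: inf_fill_small (harmonic_gt0 k) (boke w) (svalP (cid (pack k))) T0t0 _.
  by move=> t /K_eq /= ->.
rewrite -(mulr0 RPsi).
apply: ler_cvg_to (cvg_cst _) (cvgM (cvg_cst _) cvg_harmonic) _.
exact: nearW le_harmonic.
Qed.
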